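(* Let $\lambda_1,\dots,\lambda_5,p,q$ be arbitrary integers, let $A(x_1,x_2,x_3)$ be the $3\times3$ matrix $[x_{ij}]$ with $x_{11}=x_1,\ x_{12}=x_2,\ x_{13}=x_3$, $x_{21}=-\lambda_3(\lambda_1-\lambda_2-\lambda_3+\lambda_5)x_2-\lambda_3(\lambda_2-\lambda_4)x_3$, $x_{22}=x_1+\lambda_1x_2+\lambda_2x_3$, $x_{23}=\lambda_3x_2+\lambda_3x_3$, $x_{31}=-\lambda_3(\lambda_2-\lambda_4)x_2+(-\lambda_1\lambda_4+\lambda_2^2-\lambda_2\lambda_5+\lambda_3\lambda_4)x_3$, $x_{32}=\lambda_2x_2+\lambda_4x_3$, $x_{33}=x_1+\lambda_3x_2+\lambda_5x_3$, and let $$P(x_1,\dots,x_6)=\begin{bmatrix}A(x_1,x_2,x_3) & A(x_4,x_5,x_6)\\ -qA(x_4,x_5,x_6) & A(x_1,x_2,x_3)+pA(x_4,x_5,x_6)\end{bmatrix}.$$ Then there exist bilinear forms $z_1,\dots,z_6$ in independent variables $x_1,\dots,x_6,y_1,\dots,y_6$, with coefficients integer polynomials in $\lambda_1,\dots,\lambda_5,p,q$, such that $P(x_1,\dots,x_6)P(y_1,\dots,y_6)=P(z_1,\dots,z_6)$; consequently the senary sextic form $f=\det P$ satisfies $f(x_1,\dots,x_6)f(y_1,\dots,y_6)=f(z_1,\dots,z_6)$. *)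

From HB Require Import structures.
From mathcomp Require Import all_boot all_order all_algebra.
From mathcomp Require Import mpoly.
Set Implicit Arguments. Unset Strict Implicit. Unset Printing Implicit Defensive.
Import GRing.Theory.
Local Open Scope ring_scope.

Definition Amat (R : comRingType) (l1 l2 l3 l4 l5 x1 x2 x3 : R) : 'M[R]_3 :=
  \matrix_(i < 3, j < 3)
    match nat_of_ord i, nat_of_ord j with
    | 0, 0 => x1
    | 0, 1 => x2
    | 0, _ => x3
    | 1, 0 => - l3 * (l1 - l2 - l3 + l5) * x2 - l3 * (l2 - l4) * x3
    | 1, 1 => x1 + l1 * x2 + l2 * x3
    | 1, _ => l3 * x2 + l3 * x3
    | _, 0 => - l3 * (l2 - l4) * x2
              + (- l1 * l4 + l2 ^+ 2 - l2 * l5 + l3 * l4) * x3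
    | _, 1 => l2 * x2 + l4 * x3
    | _, _ => x1 + l3 * x2 + l5 * x3
    end.

(* The 6x6 block matrix P(x1,...,x6); x is indexed by 'I_6 (x 0 = x_1, ...). *)
Definition Pmat (R : comRingType) (l1 l2 l3 l4 l5 p q : R) (x : 'I_6 -> R)
  : 'M[R]_(3 + 3) :=
  let A1 := Amat l1 l2 l3 l4 l5 (x (inord 0)) (x (inord 1)) (x (inord 2)) in
  let A2 := Amat l1 l2 l3 l4 l5 (x (inord 3)) (x (inord 4)) (x (inord 5)) in
  block_mx A1 A2 (- q *: A2) (A1 + p *: A2).

Definition bilin (R : comRingType) (c : 'I_6 -> 'I_6 -> 'I_6 -> R)
  (x y : 'I_6 -> R) : 'I_6 -> R :=
  fun k => \sum_(i < 6) \sum_(j < 6) c k i j * x i * y j.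

Definition params (l1 l2 l3 l4 l5 p q : int) : 'I_7 -> int :=
  fun i => nth 0 [:: l1; l2; l3; l4; l5; p; q] i.

(* The matrices A(x1,x2,x3) are the regular representation of a commutative
   rank-3 algebra: with basis e0 = 1, e1, e2 whose structure constants
   (cubic_coef) are read off the first column of A, one has
   A(a) A(b) = A(a*b) (Avec_mul).  The block matrix
   P(x) = [[A', A''], [-q A'', A' + p A'']] represents A' + A'' T where
   T^2 = p T - q (quadblock_mul), so P(x) P(y) = P(z) with z the product in
   the rank-6 algebra (cubic algebra) (x) Z[T]/(T^2 - pT + q); its structure
   constants coef6 are products of the two families (bilin_lo, bilin_hi,
   Pmat_mul).  All these constants are ring expressions in l1..l5, p, q, so
   they commute with ring morphisms (rmorph_coef6): taking them in the
   polynomial ring int[l1,...,l5,p,q] and evaluating gives the required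
   integer-polynomial bilinear forms (coefZ_eval).  Multiplicativity of the
   determinant then yields f(x) f(y) = f(z) for f = det P. *)
From HB Require Import structures.
From mathcomp Require Import all_boot all_order all_algebra.
From mathcomp Require Import mpoly.
From mathcomp Require Import ring.
Set Implicit Arguments. Unset Strict Implicit. Unset Printing Implicit Defensive.
Import GRing.Theory.
Local Open Scope ring_scope.

(* Block matrices of the shape [[A1, A2], [-q A2, A1 + p A2]] multiply like
   elements A1 + A2 T of the extension by a root T of T^2 - p T + q. *)
Section QuadraticBlocks.
Variables (R : comRingType) (n : nat) (p q : R).

Definition quadblock (A1 A2 : 'M[R]_n) : 'M[R]_(n + n) :=
  block_mx A1 A2 (- q *: A2) (A1 + p *: A2).

Lemma quadblock_mul (A1 A2 B1 B2 : 'M[R]_n) :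
  quadblock A1 A2 *m quadblock B1 B2 =
  quadblock (A1 *m B1 + - q *: (A2 *m B2))
            (A1 *m B2 + A2 *m B1 + p *: (A2 *m B2)).
Proof.
rewrite mulmx_block !mulmxDl !mulmxDr -!scalemxAl -!scalemxAr /quadblock.
by congr block_mx; apply/matrixP => i j; rewrite !mxE; ring.
Qed.
End QuadraticBlocks.

(* A sum over 'I_n.+1 written with nat indices, so that for a concrete n it
   unfolds into an explicit sum of terms F (inord k). *)
Lemma sum_inord (V : nmodType) (n : nat) (F : 'I_n.+1 -> V) :
  \sum_(i < n.+1) F i = \sum_(k <- iota 0 n.+1) F (inord k).
Proof.
rewrite -[iota _ _]/(index_iota 0 n.+1) big_mkord.
by apply: eq_bigr => i _; rewrite inord_val.
Qed.

Ltac expand_sums := repeat rewrite sum_inord /= ?big_cons ?big_nil ?addr0.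

Section CubicAlgebra.
Variables (R : comRingType) (l1 l2 l3 l4 l5 : R).

(* cubic_coef k i j is the e_k-coordinate of e_i * e_j. *)
Definition cubic_coef (k i j : nat) : R :=
  match i, j with
  | 0, _ => (k == j)%:R
  | _, 0 => (k == i)%:R
  | 1, 1 => nth 0 [:: - l3 * (l1 - l2 - l3 + l5); l1; l3] k
  | 2, 2 => nth 0 [:: - l1 * l4 + l2 ^+ 2 - l2 * l5 + l3 * l4; l4; l5] k
  | _, _ => nth 0 [:: - l3 * (l2 - l4); l2; l3] k
  end.

Definition cubic_mul (a b : 'I_3 -> R) (k : 'I_3) : R :=
  \sum_(i < 3) \sum_(j < 3) cubic_coef k i j * a i * b j.

Definition Avec (a : 'I_3 -> R) : 'M[R]_3 :=
  Amat l1 l2 l3 l4 l5 (a (inord 0)) (a (inord 1)) (a (inord 2)).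

Lemma Avec_mul (a b : 'I_3 -> R) : Avec a *m Avec b = Avec (cubic_mul a b).
Proof.
apply/matrixP => i j; rewrite /Avec /Amat /cubic_mul.
case: i => [[|[|[|//]]] ?]; case: j => [[|[|[|//]]] ?];
  rewrite !mxE; expand_sums; rewrite !mxE !inordK //=; ring.
Qed.

Lemma Avec_ext (a b : 'I_3 -> R) : a =1 b -> Avec a = Avec b.
Proof. by move=> eq_ab; rewrite /Avec !eq_ab. Qed.

Lemma Avec_add (a b : 'I_3 -> R) : Avec (fun k => a k + b k) = Avec a + Avec b.
Proof.
apply/matrixP => i j; rewrite /Avec /Amat !mxE.
by case: i => [[|[|[|//]]] ?]; case: j => [[|[|[|//]]] ?] /=; ring.
Qed.

Lemma Avec_scaleD (c : R) (a b : 'I_3 -> R) :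
  Avec (fun k => a k + c * b k) = Avec a + c *: Avec b.
Proof.
apply/matrixP => i j; rewrite /Avec /Amat !mxE.
by case: i => [[|[|[|//]]] ?]; case: j => [[|[|[|//]]] ?] /=; ring.
Qed.
End CubicAlgebra.

(* Index i = 3 r + a of the rank-6 algebra, returned as (r, a): the basis
   vector e_a T^r. *)
Definition block_pos (i : nat) : nat * nat :=
  match i with
  | 0 => (0, 0) | 1 => (0, 1) | 2 => (0, 2)
  | 3 => (1, 0) | 4 => (1, 1) | _ => (1, 2)
  end%N.

Section SexticAlgebra.
Variables (R : comRingType) (l1 l2 l3 l4 l5 p q : R).

(* quad_coef t r s is the T^t-coordinate of T^r * T^s, using T^2 = p T - q. *)
Definition quad_coef (t r s : nat) : R :=
  match r, s with
  | 0, _ => (t == s)%:R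
  | _, 0 => (t == r)%:R
  | _, _ => nth 0 [:: - q; p] t
  end.

(* Structure constants of the tensor product of the two algebras. *)
Definition coef6 (k i j : 'I_6) : R :=
  cubic_coef l1 l2 l3 l4 l5 (block_pos k).2 (block_pos i).2 (block_pos j).2
  * quad_coef (block_pos k).1 (block_pos i).1 (block_pos j).1.

(* The two coordinate halves x = x' + x'' T. *)
Definition lo (x : 'I_6 -> R) (k : 'I_3) : R := x (inord k).
Definition hi (x : 'I_6 -> R) (k : 'I_3) : R := x (inord (k + 3)).

Notation cmul := (cubic_mul l1 l2 l3 l4 l5).

(* (x' + x'' T)(y' + y'' T) = (x'y' - q x''y'') + (x'y'' + x''y' + p x''y'') T,
   read off coordinatewise from the bilinear form with constants coef6. *)
Lemma bilin_lo (x y : 'I_6 -> R) :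
  lo (bilin coef6 x y) =1
  fun k => cmul (lo x) (lo y) k + - q * cmul (hi x) (hi y) k.
Proof.
move=> k; rewrite /lo /hi /bilin /cubic_mul /coef6.
by case: k => [[|[|[|//]]] ?]; expand_sums; rewrite !inordK //=; ring.
Qed.

Lemma bilin_hi (x y : 'I_6 -> R) :
  hi (bilin coef6 x y) =1 fun k =>
    cmul (lo x) (hi y) k + cmul (hi x) (lo y) k + p * cmul (hi x) (hi y) k.
Proof.
move=> k; rewrite /lo /hi /bilin /cubic_mul /coef6.
by case: k => [[|[|[|//]]] ?]; expand_sums; rewrite !inordK //=; ring.
Qed.

Lemma Pmat_quadblock (x : 'I_6 -> R) :
  Pmat l1 l2 l3 l4 l5 p q x =
  quadblock p q (Avec l1 l2 l3 l4 l5 (lo x)) (Avec l1 l2 l3 l4 l5 (hi x)).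
Proof. by rewrite /Pmat /quadblock /Avec /lo /hi !inordK. Qed.

Lemma Pmat_mul (x y : 'I_6 -> R) :
  Pmat l1 l2 l3 l4 l5 p q x *m Pmat l1 l2 l3 l4 l5 p q y =
  Pmat l1 l2 l3 l4 l5 p q (bilin coef6 x y).
Proof.
rewrite !Pmat_quadblock quadblock_mul !Avec_mul.
rewrite (Avec_ext _ _ _ _ _ (bilin_lo x y)) (Avec_ext _ _ _ _ _ (bilin_hi x y)).
by rewrite !Avec_scaleD Avec_add.
Qed.
End SexticAlgebra.

(* The structure constants are built from the parameters by ring operations
   only, hence commute with every ring morphism. *)
Section MorphismInvariance.
Variables (S T : comRingType) (f : {rmorphism S -> T}).
Variables (l1 l2 l3 l4 l5 p q : S).

Lemma rmorph_cubic_coef (k i j : nat) :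
  f (cubic_coef l1 l2 l3 l4 l5 k i j) =
  cubic_coef (f l1) (f l2) (f l3) (f l4) (f l5) k i j.
Proof.
by case: i => [|[|[|i]]]; case: j => [|[|[|j]]]; case: k => [|[|[|k]]];
  rewrite /= ?nth_nil ?rmorph_nat
    ?(rmorph0, rmorphB, rmorphD, rmorphN, rmorphM, rmorphXn).
Qed.

Lemma rmorph_quad_coef (t r s : nat) :
  f (quad_coef p q t r s) = quad_coef (f p) (f q) t r s.
Proof.
by case: r => [|[|r]]; case: s => [|[|s]]; case: t => [|[|t]];
  rewrite /= ?nth_nil ?rmorph_nat ?(rmorph0, rmorphN).
Qed.

Lemma rmorph_coef6 (k i j : 'I_6) :
  f (coef6 l1 l2 l3 l4 l5 p q k i j) =
  coef6 (f l1) (f l2) (f l3) (f l4) (f l5) (f p) (f q) k i j.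
Proof. by rewrite rmorphM rmorph_cubic_coef rmorph_quad_coef. Qed.
End MorphismInvariance.

Definition pvar (n : nat) : {mpoly int[7]} := 'X_(inord n).

Definition coefZ : 'I_6 -> 'I_6 -> 'I_6 -> {mpoly int[7]} :=
  coef6 (pvar 0) (pvar 1) (pvar 2) (pvar 3) (pvar 4) (pvar 5) (pvar 6).

Lemma coefZ_eval (R : comRingType) (l1 l2 l3 l4 l5 p q : int) (k i j : 'I_6) :
  ((coefZ k i j).@[params l1 l2 l3 l4 l5 p q])%:~R =
  coef6 (l1%:~R) (l2%:~R) (l3%:~R) (l4%:~R) (l5%:~R) (p%:~R) (q%:~R) k i j :> R.
Proof. by rewrite /coefZ !rmorph_coef6 /= /pvar !mevalXU /params !inordK. Qed.

Lemma bilin_ext (R : comRingType) (c c' : 'I_6 -> 'I_6 -> 'I_6 -> R)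
    (x y : 'I_6 -> R) :
  (forall k i j, c k i j = c' k i j) -> bilin c x y =1 bilin c' x y.
Proof.
by move=> eq_c k; apply: eq_bigr => i _; apply: eq_bigr => j _; rewrite eq_c.
Qed.

Lemma Pmat_ext (R : comRingType) (l1 l2 l3 l4 l5 p q : R) (x x' : 'I_6 -> R) :
  x =1 x' -> Pmat l1 l2 l3 l4 l5 p q x = Pmat l1 l2 l3 l4 l5 p q x'.
Proof. by move=> eq_x; rewrite /Pmat !eq_x. Qed.

Theorem mainTheorem8 :
  exists c : 'I_6 -> 'I_6 -> 'I_6 -> {mpoly int[7]},
  forall (l1 l2 l3 l4 l5 p q : int) (R : comRingType) (x y : 'I_6 -> R),
    let cR := fun k i j => ((c k i j).@[params l1 l2 l3 l4 l5 p q])%:~R : R in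
    let PP := Pmat (l1%:~R) (l2%:~R) (l3%:~R) (l4%:~R) (l5%:~R) (p%:~R) (q%:~R) in
    PP x *m PP y = PP (bilin cR x y) /\
    \det (PP x) * \det (PP y) = \det (PP (bilin cR x y)).
Proof.
exists coefZ => l1 l2 l3 l4 l5 p q R x y cR PP.
have mulP : PP x *m PP y = PP (bilin cR x y).
  rewrite /PP Pmat_mul; apply: Pmat_ext; apply: bilin_ext => k i j.
  by rewrite /cR coefZ_eval.
by split; rewrite // -det_mulmx mulP.
Qed.
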